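(* Let $\mathbf S=\langle S,\wedge,1\rangle$ be a complete meet semilattice, and let $\operatorname{Sub}\mathbf S$ denote the lattice of all complete subsemilattices of $\mathbf S$ (subsets closed under arbitrary meets). Then there is a dual isomorphism between the complete sublattices of $\operatorname{Sub}\mathbf S$ and the quasi-orders $\varepsilon$ on $S$ satisfying: (1)$'$ if $\bigwedge_i c_i\,\varepsilon\,d$ then there exist elements $d_i$ with $c_i\,\varepsilon\,d_i$ for each $i$ and $d=\bigwedge_i d_i$; (2) if $1\,\varepsilon\,d$ then $d=1$; (3)$'$ if $c\,\varepsilon\,c_i$ for all $i$, then $c\,\varepsilon\,\bigwedge_i c_i$; (4) $c\,\varepsilon\,1$ for all $c\in S$. Under this correspondence, a complete sublattice $\mathbf T$ corresponds to the quasi-order $\rho$ with $c\,\rho\,d$ iff $c\in X\Rightarrow d\in X$ for all $X\in\mathbf T$, and a quasi-order $\varepsilon$ corresponds to the lattice of $\varepsilon$-closed complete subsemilattices.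
   Context: A subset $X$ is $\varepsilon$-closed if $c\in X$ and $c\,\varepsilon\,d$ imply $d\in X$. A complete sublattice of $\operatorname{Sub}\mathbf S$ is a subset closed under arbitrary meets and joins computed in $\operatorname{Sub}\mathbf S$. Quasi-orders are ordered by inclusion. *)

Set Implicit Arguments.
Unset Strict Implicit.

(** A complete meet semilattice S = <S, /\, 1>, presented through its
    partial order together with an infimum for every subset. *)
Record cmsl := CMSL {
  carrier :> Type;
  le : carrier -> carrier -> Prop;
  le_refl : forall x, le x x;
  le_trans : forall x y z, le x y -> le y z -> le x z;
  le_anti : forall x y, le x y -> le y x -> x = y;
  inf : (carrier -> Prop) -> carrier;
  inf_lb : forall (A : carrier -> Prop) x, A x -> le (inf A) x;
  inf_glb : forall (A : carrier -> Prop) y,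
      (forall x, A x -> le y x) -> le y (inf A)
}.

Section Defs.
Variable S : cmsl.

Definition meetI (I : Type) (c : I -> S) : S := inf (fun x => exists i, c i = x).

Definition top : S := inf (fun _ => False).

Definition is_subsl (X : S -> Prop) : Prop :=
  forall A : S -> Prop, (forall x, A x -> X x) -> X (inf A).

Definition Sub_meet (F : (S -> Prop) -> Prop) : S -> Prop :=
  fun x => forall X, F X -> X x.
Definition Sub_join (F : (S -> Prop) -> Prop) : S -> Prop :=
  fun x => forall Y, is_subsl Y -> (forall X, F X -> forall y, X y -> Y y) -> Y x.

Definition complete_sublattice (T : (S -> Prop) -> Prop) : Prop :=
  (forall X, T X -> is_subsl X) /\
  (forall F : (S -> Prop) -> Prop, (forall X, F X -> T X) -> T (Sub_meet F)) /\
  (forall F : (S -> Prop) -> Prop, (forall X, F X -> T X) -> T (Sub_join F)).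

Definition quasi_order (e : S -> S -> Prop) : Prop :=
  (forall c, e c c) /\ (forall c d f, e c d -> e d f -> e c f).

Definition cond1' (e : S -> S -> Prop) : Prop :=
  forall (I : Type) (c : I -> S) (d : S), e (meetI c) d ->
    exists dd : I -> S, (forall i, e (c i) (dd i)) /\ d = meetI dd.
Definition cond2 (e : S -> S -> Prop) : Prop := forall d, e top d -> d = top.
Definition cond3' (e : S -> S -> Prop) : Prop :=
  forall (I : Type) (c : S) (cs : I -> S), (forall i, e c (cs i)) -> e c (meetI cs).
Definition cond4 (e : S -> S -> Prop) : Prop := forall c, e c top.

Definition admissible (e : S -> S -> Prop) : Prop :=
  quasi_order e /\ cond1' e /\ cond2 e /\ cond3' e /\ cond4 e.

Definition rho_of (T : (S -> Prop) -> Prop) : S -> S -> Prop :=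
  fun c d => forall X, T X -> X c -> X d.

Definition eps_closed (e : S -> S -> Prop) (X : S -> Prop) : Prop :=
  forall c d, X c -> e c d -> X d.

Definition lat_of (e : S -> S -> Prop) : (S -> Prop) -> Prop :=
  fun X => is_subsl X /\ eps_closed e X.

End Defs.

(* For a complete sublattice T of Sub S, the relation rho(T) has as up-set of c
   the least member of T containing c, and every rho(T)-closed complete
   subsemilattice X is the join in T of the up-sets of its elements, so T is
   recovered from rho(T).  A join in Sub S consists of the meets of subsets of
   the union, which yields condition (1)': a meet of the c_i lying in the join
   of the up-sets of the c_i is split into one meet per up-set.  Conversely,
   for an admissible e the up-sets of e are the e-closed subsemilattices that
   recover e, and condition (1)' is exactly what makes joins in Sub S
   e-closed. *)
From Stdlib Require Import FunctionalExtensionality PropExtensionality.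

Lemma pred_ext (T : Type) (P Q : T -> Prop) :
  (forall x, P x <-> Q x) -> P = Q.
Proof.
  intros H. apply functional_extensionality; intros x.
  apply propositional_extensionality, H.
Qed.

Section CompleteMeetSemilattice.
Context {S : cmsl}.

Lemma inf_mono (A B : S -> Prop) : (forall x, A x -> B x) -> le (inf B) (inf A).
Proof. intros H. apply inf_glb. intros x Ax. apply inf_lb, H, Ax. Qed.

Lemma inf_ext (A B : S -> Prop) : (forall x, A x <-> B x) -> inf A = inf B.
Proof. intros H. apply le_anti; apply inf_mono; intros x; apply H. Qed.

Lemma inf_set1 (x : S) : inf (fun y => y = x) = x.
Proof.
  apply le_anti.
  - apply inf_lb. reflexivity.
  - apply inf_glb. intros y ->. apply le_refl.
Qed.

Lemma meetI_sig (A : S -> Prop) : meetI (fun i : {x | A x} => proj1_sig i) = inf A.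
Proof.
  apply inf_ext. intros x; split.
  - intros [[y Ay] <-]. exact Ay.
  - intros Ax. exists (exist _ x Ax). reflexivity.
Qed.

Lemma inf_cover (I : Type) (A : I -> S -> Prop) (B : S -> Prop) :
  (forall x, B x -> exists i, A i x) ->
  inf B = meetI (fun i => inf (fun x => B x /\ A i x)).
Proof.
  intros HB. apply le_anti.
  - apply inf_glb. intros y [i <-]. apply inf_mono. intros x [Bx _]. exact Bx.
  - apply inf_glb. intros x Bx. destruct (HB x Bx) as [i Aix].
    apply le_trans with (inf (fun x => B x /\ A i x)).
    + apply inf_lb. exists i. reflexivity.
    + apply inf_lb. split; assumption.
Qed.

Lemma subsl_top (X : S -> Prop) : is_subsl X -> X (top S).
Proof. intros HX. apply HX. intros x []. Qed.

Lemma is_subsl_infs (U : S -> Prop) :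
  is_subsl (fun w => exists B, (forall x, B x -> U x) /\ w = inf B).
Proof.
  intros A HA.
  exists (fun x => exists B, A (inf B) /\ (forall y, B y -> U y) /\ B x). split.
  - intros x [B [_ [HB Bx]]]. exact (HB x Bx).
  - apply le_anti.
    + apply inf_glb. intros x [B [AB [_ Bx]]].
      apply le_trans with (inf B); apply inf_lb; assumption.
    + apply inf_glb. intros a Aa. destruct (HA a Aa) as [B [HB ->]].
      apply inf_mono. intros x Bx. exists B. auto.
Qed.

Lemma Sub_meet_subsl (F : (S -> Prop) -> Prop) :
  (forall X, F X -> is_subsl X) -> is_subsl (Sub_meet F).
Proof. intros HF A HA X FX. apply (HF X FX). intros x Ax. exact (HA x Ax X FX). Qed.

Lemma Sub_join_subsl (F : (S -> Prop) -> Prop) : is_subsl (Sub_join F).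
Proof. intros A HA Y HY HF. apply HY. intros x Ax. exact (HA x Ax Y HY HF). Qed.

Lemma Sub_join_ub (F : (S -> Prop) -> Prop) X x : F X -> X x -> Sub_join F x.
Proof. intros FX Xx Y _ HF. exact (HF X FX x Xx). Qed.

Lemma Sub_join_infs (F : (S -> Prop) -> Prop) x :
  Sub_join F x ->
  exists B, (forall y, B y -> exists X, F X /\ X y) /\ x = inf B.
Proof.
  intros Hx. apply Hx; [apply is_subsl_infs|].
  intros X FX y Xy. exists (fun z => z = y). split.
  - intros z ->. exists X. auto.
  - symmetry. apply inf_set1.
Qed.

Lemma Sub_join_empty x : Sub_join (fun _ : S -> Prop => False) x -> x = top S.
Proof.
  intros Hx. destruct (Sub_join_infs _ _ Hx) as [B [HB ->]].
  apply inf_ext. intros y; split; [|intros []].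
  intros By. destruct (HB y By) as [X [[] _]].
Qed.

Lemma rho_of_quasi_order (T : (S -> Prop) -> Prop) : quasi_order (rho_of T).
Proof.
  split.
  - intros c X _ Xc. exact Xc.
  - intros c d f Hcd Hdf X TX Xc. exact (Hdf X TX (Hcd X TX Xc)).
Qed.

Lemma rho_of_closed (T : (S -> Prop) -> Prop) X : T X -> eps_closed (rho_of T) X.
Proof. intros TX c d Xc Hcd. exact (Hcd X TX Xc). Qed.

Lemma rho_of_antitone (T1 T2 : (S -> Prop) -> Prop) :
  (forall X, T1 X -> T2 X) -> forall c d, rho_of T2 c d -> rho_of T1 c d.
Proof. intros H c d Hcd X T1X. exact (Hcd X (H X T1X)). Qed.

End CompleteMeetSemilattice.

Section CompleteSublattice.
Context {S : cmsl}.
Variable T : (S -> Prop) -> Prop.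
Hypothesis T_subsl : forall X, T X -> is_subsl X.
Hypothesis T_meet : forall F, (forall X, F X -> T X) -> T (Sub_meet F).
Hypothesis T_join : forall F, (forall X, F X -> T X) -> T (Sub_join F).

Lemma rho_of_Sub_meet (c : S) : rho_of T c = Sub_meet (fun Y => T Y /\ Y c).
Proof.
  apply pred_ext. intros d; split.
  - intros Hcd Y [TY Yc]. exact (Hcd Y TY Yc).
  - intros Hd Y TY Yc. exact (Hd Y (conj TY Yc)).
Qed.

Lemma rho_of_up_in (c : S) : T (rho_of T c).
Proof. rewrite rho_of_Sub_meet. apply T_meet. intros Y [TY _]. exact TY. Qed.

Lemma rho_of_up_subsl (c : S) : is_subsl (rho_of T c).
Proof. apply T_subsl, rho_of_up_in. Qed.

Lemma closed_subsl_in (X : S -> Prop) :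
  is_subsl X -> eps_closed (rho_of T) X -> T X.
Proof.
  intros HX HXc.
  set (F := fun Y => exists c, X c /\ Y = rho_of T c).
  replace X with (Sub_join F).
  - apply T_join. intros Y [c [_ ->]]. apply rho_of_up_in.
  - apply pred_ext. intros x; split.
    + intros Hx. apply Hx; [exact HX|].
      intros Y [c [Xc ->]] y Hcy. exact (HXc c y Xc Hcy).
    + intros Xx. apply (Sub_join_ub F (rho_of T x)).
      * exists x. auto.
      * apply rho_of_quasi_order.
Qed.

Lemma rho_of_cond1' : cond1' (rho_of T).
Proof.
  intros I c d Hd.
  set (F := fun Y => exists i, Y = rho_of T (c i)).
  assert (TF : T (Sub_join F)).
  { apply T_join. intros Y [i ->]. apply rho_of_up_in. }
  assert (Fd : Sub_join F d).
  { apply (Hd _ TF). apply Sub_join_subsl. intros x [i <-].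
    apply (Sub_join_ub F (rho_of T (c i))).
    - exists i. reflexivity.
    - apply rho_of_quasi_order. }
  destruct (Sub_join_infs _ _ Fd) as [B [HB ->]].
  exists (fun i => inf (fun x => B x /\ rho_of T (c i) x)). split.
  - intros i. apply rho_of_up_subsl. intros x [_ Hx]. exact Hx.
  - apply inf_cover. intros x Bx. destruct (HB x Bx) as [Y [[i ->] Hx]].
    exists i. exact Hx.
Qed.

Lemma rho_of_cond2 : cond2 (rho_of T).
Proof.
  intros d Hd. apply Sub_join_empty, Hd.
  - apply T_join. intros X [].
  - apply subsl_top, Sub_join_subsl.
Qed.

Lemma rho_of_cond3' : cond3' (rho_of T).
Proof.
  intros I c cs Hcs X TX Xc. apply (T_subsl X TX).
  intros x [i <-]. exact (Hcs i X TX Xc).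
Qed.

Lemma rho_of_cond4 : cond4 (rho_of T).
Proof. intros c X TX _. apply subsl_top, T_subsl, TX. Qed.

Lemma rho_of_admissible : admissible (rho_of T).
Proof.
  split; [apply rho_of_quasi_order|].
  split; [exact rho_of_cond1'|].
  split; [exact rho_of_cond2|].
  split; [exact rho_of_cond3' | exact rho_of_cond4].
Qed.

Lemma lat_of_rho_of : lat_of (rho_of T) = T.
Proof.
  apply pred_ext. intros X; split.
  - intros [HX HXc]. apply closed_subsl_in; assumption.
  - intros TX. split; [apply T_subsl | apply rho_of_closed]; exact TX.
Qed.

End CompleteSublattice.

Section EpsClosedSubsemilattices.
Context {S : cmsl}.
Variable e : S -> S -> Prop.

Lemma Sub_meet_eps_closed (F : (S -> Prop) -> Prop) :
  (forall X, F X -> eps_closed e X) -> eps_closed e (Sub_meet F).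
Proof. intros HF c d Hc Hcd X FX. exact (HF X FX c d (Hc X FX) Hcd). Qed.

Lemma Sub_join_eps_closed (F : (S -> Prop) -> Prop) :
  cond1' e -> (forall X, F X -> eps_closed e X) -> eps_closed e (Sub_join F).
Proof.
  intros H1 HF.
  set (Y := fun c => forall d, e c d -> Sub_join F d).
  assert (HY : is_subsl Y).
  { intros A HA d Hd. rewrite <- meetI_sig in Hd.
    destruct (H1 _ _ _ Hd) as [dd [Hdd ->]].
    apply Sub_join_subsl. intros x [i <-]. exact (HA _ (proj2_sig i) _ (Hdd i)). }
  intros c d Hc Hcd. apply (Hc Y HY); [|exact Hcd].
  intros X FX x Xx d' Hxd'. apply (Sub_join_ub F X); [exact FX|].
  exact (HF X FX x d' Xx Hxd').
Qed.

Lemma lat_of_complete : cond1' e -> complete_sublattice (lat_of e).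
Proof.
  intros H1. split; [|split].
  - intros X [HX _]. exact HX.
  - intros F HF. split.
    + apply Sub_meet_subsl. intros X FX. apply (HF X FX).
    + apply Sub_meet_eps_closed. intros X FX. apply (HF X FX).
  - intros F HF. split.
    + apply Sub_join_subsl.
    + apply Sub_join_eps_closed; [exact H1|]. intros X FX. apply (HF X FX).
Qed.

Lemma up_set_lat_of (c : S) :
  quasi_order e -> cond3' e -> lat_of e (e c).
Proof.
  intros [_ He_trans] H3. split.
  - intros A HA. rewrite <- meetI_sig. apply H3. intros [x Ax]. exact (HA x Ax).
  - intros x y Hcx Hxy. exact (He_trans c x y Hcx Hxy).
Qed.

Lemma rho_of_lat_of : quasi_order e -> cond3' e -> rho_of (lat_of e) = e.
Proof.
  intros Hqo H3.
  apply functional_extensionality; intros c. apply pred_ext. intros d; split.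
  - intros Hcd. apply (Hcd (e c)); [apply up_set_lat_of; assumption|].
    apply (proj1 Hqo).
  - intros Hcd X [_ HXc] Xc. exact (HXc c d Xc Hcd).
Qed.

End EpsClosedSubsemilattices.

Theorem theorem8p2 (S : cmsl) :
  (forall T : (S -> Prop) -> Prop,
      complete_sublattice T -> admissible (rho_of T)) /\
  (forall e : S -> S -> Prop, admissible e -> complete_sublattice (lat_of e)) /\
  (forall T : (S -> Prop) -> Prop,
      complete_sublattice T -> lat_of (rho_of T) = T) /\
  (forall e : S -> S -> Prop, admissible e -> rho_of (lat_of e) = e) /\
  (forall T1 T2 : (S -> Prop) -> Prop,
      complete_sublattice T1 -> complete_sublattice T2 ->
      ((forall X, T1 X -> T2 X) <->
       (forall c d, rho_of T2 c d -> rho_of T1 c d))).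
Proof.
  split; [|split; [|split; [|split]]].
  - intros T [HT [HM HJ]]. exact (rho_of_admissible _ HT HM HJ).
  - intros e [_ [H1 _]]. exact (lat_of_complete _ H1).
  - intros T [HT [HM HJ]]. exact (lat_of_rho_of _ HT HM HJ).
  - intros e [Hqo [_ [_ [H3 _]]]]. exact (rho_of_lat_of _ Hqo H3).
  - intros T1 T2 [HT1 _] [_ [HM2 HJ2]]. split; [apply rho_of_antitone|].
    intros Hrho X T1X. apply (closed_subsl_in _ HM2 HJ2).
    + exact (HT1 X T1X).
    + intros c d Xc Hcd. exact (Hrho c d Hcd X T1X Xc).
Qed.
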